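(* For all integers $n \geq k \geq 1$ and $m \geq 1$, let $\Sigma = \{0,1,\dots,m\}$ and let $\Sigma^{n \times k}$ be the $(m+1)^n \times (m+1)^k$ binary matrix with rows indexed by $x \in \Sigma^n$, columns indexed by $y \in \Sigma^k$, and entry $(x,y)$ equal to $1$ if $y$ is a subsequence of $x$ and $0$ otherwise. Then $\operatorname{rank}(\Sigma^{n \times k}) = (m+1)^k$.
   Context: A string $y$ of length $k$ is a subsequence of a string $x$ of length $n$ if there exist indices $i_1 < \dots < i_k$ with $x_{i_j} = y_j$ for all $j$. Rank is over the reals. *)

From mathcomp Require Import all_boot all_order all_algebra.
From mathcomp Require Import reals.
Set Implicit Arguments. Unset Strict Implicit. Unset Printing Implicit Defensive.
Import GRing.Theory Num.Theory.
Local Open Scope ring_scope.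

(* Alphabet Sigma = {0,...,m} is 'I_m.+1; words of length n are n.-tuples.
   seq.subseq y x holds iff y is obtained from x by selecting a
   subsequence of positions (x = mask b y for some bitmask), i.e. the usual
   (not necessarily contiguous) subsequence relation. *)

Definition subseq_mx (R : nzRingType) (m n k : nat) :
  'M[R]_(#|{: n.-tuple 'I_m.+1}|, #|{: k.-tuple 'I_m.+1}|) :=
  \matrix_(i, j) (subseq (val (enum_val j : k.-tuple 'I_m.+1))
                         (val (enum_val i : n.-tuple 'I_m.+1)))%:R.

From mathcomp Require Import all_boot all_order all_algebra.
From mathcomp Require Import reals.
From mathcomp Require Import zify.
Set Implicit Arguments. Unset Strict Implicit. Unset Printing Implicit Defensive.
Import GRing.Theory Num.Theory.
Local Open Scope ring_scope.

(* The columns are linearly independent: pad each k-word y on the left with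
   n - k copies of its first letter c to get an n-word x_y.  A k-word y' that
   is a subsequence of x_y is either y itself or starts with a strictly longer
   run of equal letters than y, so, ordering the columns by the length of
   their leading run, the rows x_y exhibit the subsequence matrix as
   triangular with nonzero pivots. *)

Section LeadingRun.
Local Open Scope nat_scope.
Variable T : eqType.

Definition head_run (s : seq T) := if s is a :: _ then find (predC1 a) s else 0.

Lemma find_nseq_cat (c : T) p w :
  find (predC1 c) (nseq p c ++ w) = p + find (predC1 c) w.
Proof. by elim: p => //= p ->; rewrite eqxx. Qed.

Lemma head_run_nseq_cat (c : T) p w : p <= head_run (nseq p c ++ w).
Proof. by case: p => //= p; rewrite eqxx find_nseq_cat ltnS leq_addr. Qed.

Lemma nseq_head_run_cat (c : T) y :
  c :: y = nseq (head_run (c :: y)) c ++ drop (head_run (c :: y)) (c :: y).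
Proof.
rewrite /head_run; elim: (c :: y) => //= a s IH.
by case: eqP => [->|_] /=; [rewrite -IH | ].
Qed.

Lemma subseq_nseq_cat (c : T) r y s : subseq s (nseq r c ++ y) ->
  exists t w, s = nseq t c ++ w /\ subseq w y.
Proof.
elim: r s => [|r IH] [|a s] /=; do ?by exists 0, [::]; rewrite sub0seq.
  by move=> sub_y; exists 0, (a :: s).
case: eqP => [-> | _] /IH [t [w [-> sub_w]]]; first by exists t.+1, w.
by exists t, w.
Qed.

Lemma subseq_nseq_cat_head_run (c : T) r y y' :
    size y' = size (c :: y) -> subseq y' (nseq r c ++ c :: y) ->
  y' = c :: y \/ head_run (c :: y) < head_run y'.
Proof.
set p := head_run (c :: y); set v := drop p (c :: y).
have def_y : c :: y = nseq p c ++ v by exact: nseq_head_run_cat.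
have -> : nseq r c ++ c :: y = nseq (r + p) c ++ v by rewrite nseqD -catA -def_y.
move=> size_y'.
case/subseq_nseq_cat => t [w [def_y' sub_w]].
have size_w : t + size w = p + size v.
  by move: size_y'; rewrite def_y' {1}def_y !size_cat !size_nseq.
have [le_wv eq_wv] := size_subseq_leqif sub_w.
have [w_v | lt_wv] := eqVneq (size w) (size v).
  have w_eq_v : w = v by apply/eqP; rewrite -eq_wv w_v.
  left; rewrite def_y def_y' w_eq_v.
  by congr (nseq _ _ ++ _); lia.
right; rewrite def_y'; apply: (leq_trans _ (head_run_nseq_cat c t w)); lia.
Qed.

End LeadingRun.

Lemma mxrank_pivots (R : fieldType) p q (M : 'M[R]_(p, q))
    (r : 'I_q -> 'I_p) (f : 'I_q -> nat) :
    (forall j, M (r j) j != 0) ->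
    (forall j j', j' != j -> M (r j) j' != 0 -> (f j < f j')%N) ->
  \rank M = q.
Proof.
move=> pivot triangular; rewrite -mxrank_tr; apply/eqP/inj_row_free => v vM0.
apply/rowP => j0; rewrite mxE; apply/eqP/negP => /negP vj0.
case: (@arg_maxnP _ j0 (fun j => v 0 j != 0) f vj0) => j vj j_max.
have := congr1 (fun u : 'rV_p => u 0 (r j)) vM0.
rewrite !mxE (bigD1 j) //= big1 ?addr0 => [|j' nj'].
  by rewrite mxE => /eqP; rewrite mulf_eq0 (negPf vj) (negPf (pivot j)).
rewrite mxE; have [->|nz] := eqVneq (M (r j) j') 0; first by rewrite mulr0.
apply/eqP; rewrite mulf_eq0; apply/orP; left.
by apply: contraLR (triangular _ _ nj' nz) => /j_max; rewrite -leqNgt.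
Qed.

Theorem mainTheorem3 (R : realType) (n k m : nat) :
  (1 <= k)%N -> (k <= n)%N -> (1 <= m)%N ->
  \rank (subseq_mx R m n k) = (m.+1 ^ k)%N.
Proof.
move=> k_gt0 le_kn _.
pose word (j : 'I_#|{: k.-tuple 'I_m.+1}|) := val (enum_val j).
pose pad j : n.-tuple 'I_m.+1 := tcast (subnK le_kn)
  (cat_tuple (nseq_tuple (n - k) (head ord0 (word j))) (enum_val j)).
have -> : (m.+1 ^ k)%N = #|{: k.-tuple 'I_m.+1}| by rewrite card_tuple card_ord.
apply: (@mxrank_pivots _ _ _ (subseq_mx R m n k)
  (fun j => enum_rank (pad j)) (fun j => head_run (word j))).
  by move=> j; rewrite mxE enum_rankK /pad /= val_tcast /= suffix_subseq oner_neq0.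
move=> j j' nj'; rewrite mxE enum_rankK /pad /= val_tcast /= pnatr_eq0 eqb0 negbK.
rewrite -/(word j) -/(word j').
have size_word i : size (word i) = k by rewrite size_tuple.
case def_y: (word j) (size_word j) => [|c y] size_y; first by rewrite -size_y in k_gt0.
move=> /= sub_y.
have size_y' : size (word j') = size (c :: y) by rewrite size_y size_word.
have [eq_word|//] := subseq_nseq_cat_head_run size_y' sub_y.
by case/eqP: nj'; apply/enum_val_inj/val_inj; rewrite -/(word j') eq_word.
Qed.
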